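(* Assume the standing assumptions (i)–(viii) below and let $\delta\in(0,1)$, $T\ge1$. Consider RFedAGS with fixed batch size $B_{t,k}=\bar B$ and fixed step size $\alpha_{t,k}=\bar\alpha$, and let $\tilde K\ge2$ be an integer such that $2-\delta\ge L\bar\alpha$ and, for every $K\in\{2,\dots,\tilde K\}$, $1\ge L^2\bar\alpha^2M(K+1)(K-2)+\bar\alpha LK$ and $1-\delta\ge2L^2\bar\alpha^2M$. For $K\in\{1,\dots,\tilde K\}$ define \[ Q_1(K)=\frac{2(F(\tilde x_1)-F(x^* ))}{T(K-1+\delta)\bar\alpha}+\frac{\bar\alpha K\sigma^2L}{(K-1+\delta)\bar B}\Big(\frac{\bar\alpha(2K-1)(K-1)ML}{3}+\frac KS\Big), \] the upper bound on $\frac1T\mathbb{E}[\sum_{t=1}^T\|\mathrm{grad}F(\tilde x_t)\|^2]$ obtained when RFedAGS is run with $K$ local steps, and call $K^*\in\arg\min_{K\in\{1,\dots,\tilde K\}}Q_1(K)$ an optimal choice of $K$. If \[ F(\tilde x_1)-F(x^* )>\frac{(3\delta-1)\bar\alpha^2TL\sigma^2}{2S\bar B}+\frac{\delta\bar\alpha^3\sigma^2L^2TM}{\bar B}, \] then every optimal choice satisfies $K^*>1$.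
   Context: $\mathcal{M}$ is a Riemannian manifold with inner product $\langle\cdot,\cdot\rangle_x$ and norm $\|\cdot\|$ on each tangent space $\mathrm{T}_x\mathcal{M}$; $\mathrm{grad}$ is the Riemannian gradient, $0_x$ the zero of $\mathrm{T}_x\mathcal{M}$. $F(x)=\mathbb{E}_{\xi\sim\mathcal{D}}[f(x;\xi)]$ for a data distribution $\mathcal{D}$; $x^*\in\arg\min_{x\in\mathcal M}F(x)$. $\mathrm{R}$ is a smooth retraction ($\mathrm{R}_x(0_x)=x$, $\mathrm{D}\mathrm{R}_x(0_x)=\mathrm{id}$). A set $\mathcal{W}\subseteq\mathcal{M}$ is totally retractive if there is $r>0$ such that for every $y\in\mathcal{W}$, $\mathcal{W}\subseteq\mathrm{R}_y(\mathbb{B}(0_y,r))$ and $\mathrm{R}_y$ is a diffeomorphism on $\mathbb{B}(0_y,r)$; then $\mathrm{R}_x^{-1}(y)$ is defined for $x,y\in\mathcal{W}$. A vector transport $\Gamma$ associated with $\mathrm{R}$ gives, for $x,y\in\mathcal{W}$, a linear map $\Gamma_x^y:\mathrm{T}_x\mathcal{M}\to\mathrm{T}_y\mathcal{M}$; it is isometric if it preserves inner products. Algorithm RFedAGS (with $S$ agents, $K$ local steps, step sizes $\alpha_{t,k}>0$, batch sizes $B_{t,k}\in\mathbb{N}$, initial point $\tilde x_1$): for $t=1,2,\dots$, for each agent $j$ set $x_{t,0}^j=\tilde x_t$, $\zeta_{t,0}^j=0_{\tilde x_t}$; for $k=1,\dots,K$ agent $j$ draws a mini-batch $\mathcal{B}^j_{t,k-1}$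 of $B_{t,k-1}$ i.i.d. samples $\xi^j_{t,k-1,s}\sim\mathcal{D}$ (independent of all other samples), sets $\eta^j_{k-1}=-\frac{\alpha_{t,k-1}}{B_{t,k-1}}\sum_{s\in\mathcal{B}^j_{t,k-1}}\mathrm{grad}f(x^j_{t,k-1};\xi^j_{t,k-1,s})$, $x^j_{t,k}=\mathrm{R}_{x^j_{t,k-1}}(\eta^j_{k-1})$, $\zeta^j_{t,k}=\zeta^j_{t,k-1}+\Gamma_{x^j_{t,k-1}}^{\tilde x_t}(\eta^j_{k-1})$; then $\tilde x_{t+1}=\mathrm{R}_{\tilde x_t}\big(\frac1S\sum_{j}\zeta^j_{t,K}\big)$. $\mathbb{E}$ denotes total expectation. Standing assumptions: (i) $x^*$, all $\tilde x_t$ and all $x^j_{t,k}$ lie in a compact connected set $\mathcal{W}$ totally retractive w.r.t. $\mathrm{R}$; (ii) each $f(\cdot;\xi)$ is continuously differentiable; (iii) $\Gamma$ is isometric; (iv) $F$ is $L$-retraction-smooth on $\mathcal{W}$ ($F(\mathrm{R}_x(\eta))\le F(x)+\langle\mathrm{grad}F(x),\eta\rangle+\frac L2\|\eta\|^2$ for $x\in\mathcal{W}$, $\mathrm{R}_x(\eta)\in\mathcal{W}$) and $L$-Lipschitz continuously differentiable w.r.t. $\Gamma$ on $\mathcal{W}$ ($\|\Gamma_x^y(\mathrm{grad}F(x))-\mathrm{grad}F(y)\|\le L\|\eta\|$ whenever $x\in\mathcal{W}$, $y=\mathrm{R}_x(\eta)\in\mathcal{W}$); (v) $\alpha_{t,k}\le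 A$ for all $t,k$; (vi) $\mathbb{E}_\xi[\mathrm{grad}f(x;\xi)]=\mathrm{grad}F(x)$; (vii) there is $\sigma>0$ with $\mathbb{E}\|\frac1B\sum_s\mathrm{grad}f(x;\xi_s)-\mathrm{grad}F(x)\|^2\le\sigma^2/B$ for every $x\in\mathcal{W}$ and every mini-batch of $B$ i.i.d. samples; (viii) there is $C_1>0$ with $\|\mathrm{grad}f(x;\xi)\|\le C_1$ for all $x\in\mathcal{W}$ and all $\xi$. Constant $M$: with $P_{x,y}=\mathrm{R}_y^{-1}\circ\mathrm{R}_x$ for $x,y\in\mathcal{W}$, $C_2,C_3>0$ are constants (uniform bounds on the first and second derivatives of $P_{x,y}$ on its compact domain) such that for all $x,y\in\mathcal{W}$ and $\eta\in\mathrm{T}_x\mathcal{M}$ with $\mathrm{R}_x(\eta)\in\mathcal{W}$: $\|\mathrm{D}P_{x,y}(0_x)\|_{\mathrm{op}}\le C_2$ and $\|P_{x,y}(\eta)-P_{x,y}(0_x)-\mathrm{D}P_{x,y}(0_x)[\eta]\|\le C_3\|\eta\|^2$. Then $M=C_2^2+A^2C_1^2C_3^2$. *)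

From Stdlib Require Import Reals.
Open Scope R_scope.

(* Q_1(K) from the paper, with D = F(x~_1) - F(xstar). *)
Definition Q1 (D : R) (T : nat) (delta alpha sigma L : R) (B S : nat) (M : R)
  (K : nat) : R :=
  2 * D / (INR T * (INR K - 1 + delta) * alpha)
  + alpha * INR K * sigma ^ 2 * L / ((INR K - 1 + delta) * INR B)
    * (alpha * (2 * INR K - 1) * (INR K - 1) * M * L / 3 + INR K / INR S).

Definition optimal_K (Q : nat -> R) (Ktilde Kstar : nat) : Prop :=
  (1 <= Kstar <= Ktilde)%nat /\
  forall K : nat, (1 <= K <= Ktilde)%nat -> Q Kstar <= Q K.

(* Of the step-size conditions only positivity matters: comparing K = 1 with K = 2,
   Q1 1 - Q1 2 is a positive multiple of the difference between the initial
   optimality gap and the threshold in the hypothesis, so K = 2 beats K = 1. *)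

From Stdlib Require Import Reals Lra Lia.
Open Scope R_scope.

Lemma Q1_1_sub_Q1_2 (D : R) (T : nat) (delta alpha sigma L : R) (B S : nat) (M : R) :
  (0 < T)%nat -> (0 < B)%nat -> (0 < S)%nat -> 0 < alpha -> 0 < delta ->
  Q1 D T delta alpha sigma L B S M 1 - Q1 D T delta alpha sigma L B S M 2
  = 2 / (delta * (1 + delta) * INR T * alpha) *
    (D - ((3 * delta - 1) * alpha ^ 2 * INR T * L * sigma ^ 2 / (2 * INR S * INR B)
          + delta * alpha ^ 3 * sigma ^ 2 * L ^ 2 * INR T * M / INR B)).
Proof.
  intros HT HB HS Halpha Hdelta.
  apply lt_0_INR in HT, HB, HS.
  unfold Q1; simpl INR.
  field; repeat split; lra.
Qed.

Lemma Q1_2_lt_Q1_1 (D : R) (T : nat) (delta alpha sigma L : R) (B S : nat) (M : R) :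
  (0 < T)%nat -> (0 < B)%nat -> (0 < S)%nat -> 0 < alpha -> 0 < delta ->
  D > (3 * delta - 1) * alpha ^ 2 * INR T * L * sigma ^ 2 / (2 * INR S * INR B)
      + delta * alpha ^ 3 * sigma ^ 2 * L ^ 2 * INR T * M / INR B ->
  Q1 D T delta alpha sigma L B S M 2 < Q1 D T delta alpha sigma L B S M 1.
Proof.
  intros HT HB HS Halpha Hdelta Hgap.
  apply Rlt_0_minus.
  rewrite Q1_1_sub_Q1_2 by assumption.
  apply Rmult_lt_0_compat; [|lra].
  apply lt_0_INR in HT.
  apply Rdiv_lt_0_compat; [lra|].
  repeat apply Rmult_lt_0_compat; lra.
Qed.

Lemma optimal_K_gt1 (Q : nat -> R) (Ktilde Kstar : nat) :
  (2 <= Ktilde)%nat -> Q 2%nat < Q 1%nat -> optimal_K Q Ktilde Kstar -> (1 < Kstar)%nat.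
Proof.
  intros HKt HQ [[HK1 HK2] Hopt].
  destruct (Nat.eq_dec Kstar 1) as [-> | Hne]; [|lia].
  specialize (Hopt 2%nat ltac:(lia)).
  lra.
Qed.

Theorem theorem6
  (X : Type) (F : X -> R) (xstar x1 : X)
  (Hmin : forall x : X, F xstar <= F x)
  (S B T Ktilde : nat) (L sigma alpha delta A C1 C2 C3 M : R)
  (HS : (1 <= S)%nat) (HB : (1 <= B)%nat) (HT : (1 <= T)%nat)
  (HL : 0 < L) (Hsigma : 0 < sigma) (HC1 : 0 < C1) (HC2 : 0 < C2) (HC3 : 0 < C3)
  (HM : M = C2 ^ 2 + A ^ 2 * C1 ^ 2 * C3 ^ 2)
  (Halpha : 0 < alpha) (HalphaA : alpha <= A)
  (Hdelta : 0 < delta < 1)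
  (HKt : (2 <= Ktilde)%nat)
  (H1 : 2 - delta >= L * alpha)
  (H2 : forall K : nat, (2 <= K <= Ktilde)%nat ->
          1 >= L ^ 2 * alpha ^ 2 * M * (INR K + 1) * (INR K - 2) + alpha * L * INR K)
  (H3 : 1 - delta >= 2 * L ^ 2 * alpha ^ 2 * M)
  (Hgap : F x1 - F xstar >
          (3 * delta - 1) * alpha ^ 2 * INR T * L * sigma ^ 2 / (2 * INR S * INR B)
          + delta * alpha ^ 3 * sigma ^ 2 * L ^ 2 * INR T * M / INR B) :
  forall Kstar : nat,
    optimal_K (Q1 (F x1 - F xstar) T delta alpha sigma L B S M) Ktilde Kstar ->
    (1 < Kstar)%nat.
Proof.
  intros Kstar Hopt.
  refine (optimal_K_gt1 _ _ _ HKt _ Hopt).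
  apply Q1_2_lt_Q1_1; [lia|lia|lia|lra|lra|assumption].
Qed.
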